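(* Let $a\in\mathbb{C}$ be generic and $f(\zeta)=\sum_{w^*\in\mathcal{V}(\Delta^* )}\zeta^{w^*}+a\,\zeta^{0^*}\in\mathbb{C}[\zeta_v:v\in\mathcal{V}(\Delta)]$, and let $J(f)$ be the ideal generated by the partial derivatives $\partial f/\partial\zeta_v$, $v\in\mathcal{V}(\Delta)$. Let $x^*\in L^*$ lie in the relative interior of a facet of $\Delta^*$. Then $$\zeta^{x^*}\equiv\sum\{\mathbb{C}\,\zeta^{v^*}: v^*\in L^*\cap(\partial\Delta^*\setminus\textstyle\bigcup_{F^*\text{ facet of }\Delta^*}\mathrm{Int}(F^* ))\}\pmod{J(f)},$$ i.e. $\zeta^{x^*}$ is congruent modulo $J(f)$ to a $\mathbb{C}$-linear combination of monomials $\zeta^{v^*}$ with $v^*$ lattice points of $\partial\Delta^*$ lying in faces of dimension less than $n-1$.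
   Context: $L$ is a lattice of rank $n$, $L^*$ its dual; $(\Delta,L)$ is a reflexive polytope (an $n$-dimensional lattice polytope with the origin in its interior such that $\Delta^*=\{y\in L^*_{\mathbb{R}}:\langle y,x\rangle\ge-1\ \forall x\in\Delta\}$ is also a lattice polytope). $\mathcal{V}(\Delta)$, $\mathcal{V}(\Delta^* )$ are the vertex sets, $0^*$ is the origin of $L^*$, and $\mathrm{Int}$ denotes relative interior. The variables $\zeta=(\zeta_v)_{v\in\mathcal{V}(\Delta)}$ are homogeneous coordinates of the toric variety defined by the fan of cones over the faces of $\Delta$; for $v^*\in\Delta^*\cap L^*$ the monomial is $\zeta^{v^*}=\prod_{v\in\mathcal{V}(\Delta)}\zeta_v^{\langle v^*,v\rangle+1}$ (exponents are non-negative integers). *)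

From HB Require Import structures.
From mathcomp Require Import all_boot all_order all_algebra.
From mathcomp Require Import reals.
From mathcomp Require Import complex.
From mathcomp Require Import mpoly.
Set Implicit Arguments. Unset Strict Implicit. Unset Printing Implicit Defensive.
Import Order.TTheory GRing.Theory Num.Theory.
Local Open Scope ring_scope.

Section Geometry.
Variables (R : realType) (n : nat).
Local Notation vec := 'rV[R]_n.

(* embedding of the lattice L = Z^n (and L^* = Z^n) into R^n *)
Definition lat (x : 'rV[int]_n) : vec := map_mx (fun z : int => z%:~R) x.

Definition dot (y x : vec) : R := \sum_(i < n) y 0 i * x 0 i.

Definition convex_hull (S : seq vec) (x : vec) : Prop :=
  exists t : 'I_(size S) -> R, (forall i, 0 <= t i) /\ \sum_i t i = 1 /\
    x = \sum_i t i *: S`_i.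

Definition affine_hull (P : vec -> Prop) (x : vec) : Prop :=
  exists (S : seq vec) (t : 'I_(size S) -> R),
    (forall y, y \in S -> P y) /\ \sum_i t i = 1 /\ x = \sum_i t i *: S`_i.

Definition is_extreme (P : vec -> Prop) (x : vec) : Prop :=
  P x /\ forall y z (t : R), P y -> P z -> 0 < t < 1 ->
    x = t *: y + (1 - t) *: z -> y = x /\ z = x.

Definition interior (P : vec -> Prop) (x : vec) : Prop :=
  exists e : R, 0 < e /\ forall y : vec, (forall i, `|y 0 i - x 0 i| < e) -> P y.

Definition boundary (P : vec -> Prop) (x : vec) : Prop := P x /\ ~ interior P x.

Definition relint (P : vec -> Prop) (x : vec) : Prop :=
  P x /\ exists e : R, 0 < e /\ forall y : vec, affine_hull P y ->
    (forall i, `|y 0 i - x 0 i| < e) -> P y.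

Definition dual (P : vec -> Prop) (y : vec) : Prop := forall x, P x -> -1 <= dot y x.

Definition proper_face (P F : vec -> Prop) : Prop :=
  exists (c : vec) (b : R), c != 0 /\ (forall y, P y -> b <= dot c y) /\
    forall y, F y <-> (P y /\ dot c y = b).

(* facet: a face of dimension n-1, i.e. containing n affinely independent
   points (rows of Q; affine independence = linear independence of (1, q_i)) *)
Definition facet (P F : vec -> Prop) : Prop :=
  proper_face P F /\ exists Q : 'M[R]_n, (forall i, F (row i Q)) /\
    row_free (row_mx (const_mx 1 : 'M[R]_(n, 1)) Q).

Definition in_facet_interior (P : vec -> Prop) (x : vec) : Prop :=
  exists F, facet P F /\ relint F x.

End Geometry.

Section Algebra.
Variables (R : realType) (n : nat) (V : seq 'rV[int]_n).
Local Notation C := (complex R).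
Local Notation k := (size V).

(* zeta^{y} = prod_{v in V(Delta)} zeta_v^{<y,v>+1}  (V enumerates V(Delta)) *)
Definition zmono (y : 'rV[int]_n) : {mpoly C[k]} :=
  \prod_(i < k) 'X_i ^+ absz ((\sum_(j < n) y 0 j * (V`_i) 0 j) + 1).

Definition in_jacobian (f g : {mpoly C[k]}) : Prop :=
  exists h : 'I_k -> {mpoly C[k]}, g = \sum_(i < k) h i * mderiv i f.

Definition fpoly (W : seq 'rV[int]_n) (a : C) : {mpoly C[k]} :=
  \sum_(w <- W) zmono w + a *: zmono 0.

End Algebra.

From HB Require Import structures.
From mathcomp Require Import all_boot all_order all_algebra.
From mathcomp Require Import reals complex mpoly.
From mathcomp Require Import zify lra.
Set Implicit Arguments. Unset Strict Implicit. Unset Printing Implicit Defensive.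
Import Order.TTheory GRing.Theory Num.Theory.
Local Open Scope ring_scope.

(* Let y be a lattice point of Delta^* at which no vertex of Delta other than
   v_i is tight (<y, v_j> = -1).  Then zeta^y zeta_i / prod_j zeta_j is a
   monomial, and multiplying df/dzeta_i by it gives the relation
     a zeta^y + sum_(w in V(Delta^* )) (<w, v_i> + 1) zeta^(w + y)  in  J(f),
   whose other monomials again come from lattice points of Delta^*; for y = 0
   it is the Euler relation zeta_i df/dzeta_i.  Let S be the finite set of
   lattice points of Delta^* with at most one tight vertex; it contains the
   relative interiors of the facets.  The relations indexed by S form a linear
   system (a + M) zeta^S = (monomials outside S) modulo J(f), which can be
   solved for every a outside the spectrum of -M.  Lattice points of Delta^*
   outside S have two tight vertices, so they lie on the boundary but in no
   relative interior of a facet. *)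

Lemma exists_unitmx_shift (F : closedFieldType) N (A : 'M[F]_N) :
  exists E : seq F, forall a, a \notin E -> a%:M + A \in unitmx.
Proof.
have [E charE] := closed_field_poly_normal (char_poly (- A)).
exists E => a aE; rewrite -row_free_unit -kermx_eq0.
apply/negPn/negP => /rowV0Pn [v /sub_kermxP vA v0].
have : eigenvalue (- A) a.
  apply/eigenvalueP; exists v => //.
  by rewrite mulmxN -[LHS]add0r -vA mulmxDr mul_mx_scalar addrK.
rewrite eigenvalue_root_char charE (monicP (char_poly_monic _)) scale1r.
by rewrite root_prod_XsubC (negbTE aE).
Qed.

Section ScaleSums.
Variables (F : pzRingType) (M : lmodType F) (N : nat) (X : 'I_N -> M).

Lemma sum_scalar_mx_scale (a : F) t : \sum_u (a%:M : 'M_N) t u *: X u = a *: X t.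
Proof.
rewrite (bigD1 t) //= big1 ?addr0; first by rewrite mxE eqxx mulr1n.
by move=> u /negbTE tu; rewrite mxE eq_sym tu mulr0n scale0r.
Qed.

Lemma sum_mulmx_scale (A B : 'M[F]_N) s :
  \sum_u A s u *: \sum_w B u w *: X w = \sum_w (A *m B) s w *: X w.
Proof.
under eq_bigr do rewrite scaler_sumr.
rewrite exchange_big; apply: eq_bigr => w _.
by rewrite mxE scaler_suml; apply: eq_bigr => u _; rewrite scalerA.
Qed.

End ScaleSums.

Section GenericElimination.
Variables (F : closedFieldType) (M : lmodType F) (P : eqType) (p0 : P).
Variable J : F -> M -> Prop.
Hypothesis J0 : forall a, J a 0.
Hypothesis JD : forall a x y, J a x -> J a y -> J a (x + y).
Hypothesis JZ : forall a c x, J a x -> J a (c *: x).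
Variables (Z : P -> M) (Q : P -> Prop) (S : seq P).
Hypothesis uS : uniq S.
Local Notation N := (size S).

Lemma J_sum a I (r : seq I) (G : I -> M) :
  (forall i, J a (G i)) -> J a (\sum_(i <- r) G i).
Proof. by move=> JG; elim/big_ind: _ => //; apply: JD. Qed.

Lemma sum_index_mem (X : M) x :
  \sum_(t < N | x == nth p0 S t) X = if x \in S then X else 0.
Proof.
case: ifP => xS; last first.
  by rewrite big_pred0 // => t; apply: contraFF xS => /eqP ->; rewrite mem_nth.
have ltxS : (index x S < N)%N by rewrite index_mem.
rewrite (big_pred1 (Ordinal ltxS)) // => t /=.
by rewrite -{1}(nth_index p0 xS) nth_uniq // -val_eqE.
Qed.

Definition coef_mx (T : 'I_N -> seq (F * P)) : 'M[F]_N :=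
  \matrix_(s, t) \sum_(q <- T s | q.2 == nth p0 S t) q.1.

Lemma sum_scale_split T s :
  \sum_(q <- T s) q.1 *: Z q.2 = \sum_t coef_mx T s t *: Z (nth p0 S t)
    + \sum_(q <- T s | q.2 \notin S) q.1 *: Z q.2.
Proof.
rewrite (bigID (fun q => q.2 \in S)); congr (_ + _).
transitivity (\sum_(q <- T s) \sum_(t < N) if q.2 == nth p0 S t then q.1 *: Z q.2 else 0).
  by rewrite big_mkcond; apply: eq_bigr => q _; rewrite -big_mkcond sum_index_mem.
rewrite exchange_big; apply: eq_bigr => t _; rewrite mxE scaler_suml [RHS]big_mkcond.
by apply: eq_bigr => q _; case: eqP => // ->.
Qed.

Lemma generic_elimination :
  (forall s, s \in S -> exists2 T : seq (F * P), (forall q, q \in T -> Q q.2) &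
     forall a, J a (a *: Z s + \sum_(q <- T) q.1 *: Z q.2)) ->
  exists E : seq F, forall a, a \notin E -> forall s, s \in S ->
  exists cs : seq (F * P), (forall q, q \in cs -> q.2 \notin S /\ Q q.2) /\
    J a (Z s - \sum_(q <- cs) q.1 *: Z q.2).
Proof.
move=> rel.
have [T HT] := fin_all_exists (fun t : 'I_N =>
  let: ex_intro2 T TQ TJ := rel _ (mem_nth p0 (ltn_ord t)) in ex_intro _ T (conj TQ TJ)).
have [E unitE] := exists_unitmx_shift (coef_mx T).
exists E => a aE s sS; pose A := a%:M + coef_mx T; pose B := invmx A.
pose G u := \sum_(q <- T u | q.2 \notin S) q.1 *: Z q.2.
have rowJ u : J a (\sum_w A u w *: Z (nth p0 S w) + G u).
  have := (HT u).2 a; rewrite sum_scale_split addrA; congr (J a (_ + _)).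
  under [RHS]eq_bigr do rewrite mxE scalerDl.
  by rewrite big_split /= sum_scalar_mx_scale.
have si : (index s S < N)%N by rewrite index_mem.
pose s' := Ordinal si.
exists (flatten [seq [seq (- (B s' u * q.1), q.2) | q <- T u & q.2 \notin S]
                | u <- enum 'I_N]); split.
  move=> q /flattenP [_ /mapP [u _ ->]] /mapP [q']; rewrite mem_filter.
  case/andP=> q'S q'T ->; split=> //=; exact: (HT u).1 _ q'T.
have := J_sum (index_enum 'I_N) (fun u => JZ (B s' u) (rowJ u)).
congr (J a _); rewrite big_flatten /= big_map big_enum /= -sumrN.
under eq_bigr do rewrite scalerDr.
rewrite big_split /= sum_mulmx_scale mulVmx ?unitE // sum_scalar_mx_scale scale1r.
rewrite /= nth_index //; congr (_ + _); apply: eq_bigr => u _.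
rewrite big_map big_filter -sumrN scaler_sumr; apply: eq_bigr => q _.
by rewrite scaleNr opprK scalerA.
Qed.

End GenericElimination.

Section Pairing.
Variables (R : realType) (n : nat).
Local Notation vec := 'rV[R]_n.

Lemma dotDl (x y z : vec) : dot (x + y) z = dot x z + dot y z.
Proof. by rewrite /dot -big_split; apply: eq_bigr => j _; rewrite mxE mulrDl. Qed.

Lemma dotZl a (x z : vec) : dot (a *: x) z = a * dot x z.
Proof. by rewrite /dot mulr_sumr; apply: eq_bigr => j _; rewrite mxE mulrA. Qed.

Lemma dotBl (x y z : vec) : dot (x - y) z = dot x z - dot y z.
Proof. by rewrite dotDl -scaleN1r dotZl mulN1r. Qed.

Lemma dot_sumr (y : vec) m (t : 'I_m -> R) (x : 'I_m -> vec) :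
  dot y (\sum_i t i *: x i) = \sum_i t i * dot y (x i).
Proof.
rewrite /dot; under eq_bigr do rewrite summxE mulr_sumr.
rewrite exchange_big; apply: eq_bigr => i _; rewrite mulr_sumr.
by apply: eq_bigr => j _; rewrite mxE mulrCA.
Qed.

Lemma dotxx_ge0 (x : vec) : 0 <= dot x x.
Proof. by apply: sumr_ge0 => i _; rewrite -expr2 sqr_ge0. Qed.

Lemma dotxx_le0 (x : vec) : dot x x <= 0 -> x = 0.
Proof.
move=> x0; apply/rowP => j; rewrite mxE; apply/eqP; rewrite -sqrf_eq0 expr2.
have xx0 : dot x x = 0 by apply/eqP; rewrite eq_le x0 dotxx_ge0.
by rewrite (psumr_eq0P _ xx0) // => i _; rewrite -expr2 sqr_ge0.
Qed.

Lemma small_scale_exists m (f : 'I_m -> R) (e : R) : 0 < e ->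
  exists2 d, 0 < d & forall i, `|d * f i| < e.
Proof.
move=> e0; pose S := \sum_i `|f i|.
have S1 : 0 < 1 + S by apply: ltr_pwDl => //; apply: sumr_ge0.
exists (e / (1 + S)) => [|i]; first by rewrite divr_gt0.
rewrite normrM (gtr0_norm (divr_gt0 e0 S1)) mulrAC ltr_pdivrMr //.
rewrite ltr_pM2l // ltr_pwDl // /S (bigD1 i) //= lerDl; exact: sumr_ge0.
Qed.

End Pairing.

Section Polar.
Variables (R : realType) (n : nat).
Local Notation vec := 'rV[R]_n.

Lemma mem_convex_hull (S : seq vec) x : x \in S -> convex_hull S x.
Proof.
rewrite -index_mem => ltxS; pose i0 := Ordinal ltxS.
exists (fun j => (j == i0)%:R); split=> [j|]; first by rewrite ler0n.
split; first by rewrite (bigD1 i0) //= eqxx big1 ?addr0 // => j /negbTE ->.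
rewrite (bigD1 i0) //= eqxx scale1r nth_index -?index_mem // big1 ?addr0 //.
by move=> j /negbTE ->; rewrite scale0r.
Qed.

Lemma convex_hull_size_gt0 (S : seq vec) x : convex_hull S x -> (0 < size S)%N.
Proof.
case=> t [_ [t1 _]]; rewrite lt0n; apply: contra_eqN t1 => /eqP S0.
by move: t; rewrite S0 => t; rewrite big_ord0 eq_sym oner_eq0.
Qed.

Lemma dual_convex_hullP (S : seq vec) y :
  dual (convex_hull S) y <-> forall x, x \in S -> -1 <= dot y x.
Proof.
split=> [yS x xS|yS x [t [t0 [t1 ->]]]]; first exact/yS/mem_convex_hull.
rewrite dot_sumr; apply: le_trans (ler_sum _ (fun i _ =>
  ler_wpM2l (t0 i) (yS _ (mem_nth 0 (ltn_ord i))))).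
by rewrite -mulr_suml t1 mul1r.
Qed.

Lemma interior_dual_dot_neq (S : seq vec) z v : v \in S ->
  interior (dual (convex_hull S)) z -> dot z v != -1.
Proof.
move=> vS [e [e0 ze]]; apply/eqP => zv.
have [d d0 dv] := small_scale_exists (fun l => v 0 l) e0.
have /dual_convex_hullP/(_ v vS) : dual (convex_hull S) (z - d *: v).
  by apply: ze => l; rewrite !mxE addrAC subrr add0r normrN.
rewrite dotBl dotZl zv => dvv.
have /dotxx_le0 v0 : dot v v <= 0 by rewrite -(pmulr_rle0 _ d0); lra.
have : dot z v = 0 by rewrite v0 /dot big1 // => l _; rewrite mxE mulr0.
by rewrite zv; lra.
Qed.

Lemma relint_dot_eq (F : vec -> Prop) x v :
  (forall z, F z -> -1 <= dot z v) -> relint F x -> dot x v = -1 ->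
  forall z, F z -> dot z v = -1.
Proof.
move=> Fv [Fx [e [e0 xe]]] xv z Fz; apply/eqP; rewrite eq_le Fv // andbT.
have [d d0 dxz] := small_scale_exists (fun l => (x - z) 0 l) e0.
have /Fv : F (x + d *: (x - z)).
  apply: xe => [|l]; last by have := dxz l; rewrite !mxE addrAC subrr add0r.
  exists [:: x; z], (fun i : 'I_2 => if i == ord0 then 1 + d else - d).
  split=> [y|]; first by rewrite !inE => /orP [] /eqP ->.
  rewrite !big_ord_recr !big_ord0 /= !add0r addrK; split=> //.
  by rewrite scalerDl scale1r scalerBr scaleNr addrA.
rewrite dotDl dotZl dotBl xv => h.
have : 0 <= d * (-1 - dot z v) by lra.
by rewrite pmulr_rge0 // subr_ge0.
Qed.

Lemma affinely_free_dot_inj (Q : 'M[R]_n) (u v : vec) :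
  row_free (row_mx (const_mx 1 : 'M[R]_(n, 1)) Q) ->
  (forall r, dot (row r Q) u = -1) -> (forall r, dot (row r Q) v = -1) -> u = v.
Proof.
(* [1 | Q] has full row rank n, so the kernel of its transpose is the line
   spanned by (1, u). *)
set M := row_mx _ Q => Mfree Qu Qv.
have ker w : (forall r, dot (row r Q) w = -1) ->
    (row_mx (1 : 'M[R]_1) w <= kermx M^T)%MS.
  move=> Qw; apply/sub_kermxP; rewrite tr_row_mx mul_row_col; apply/rowP => r.
  rewrite !mxE big_ord1 !mxE.
  have -> : \sum_(j < n) w 0 j * Q^T j r = dot (row r Q) w.
    by apply: eq_bigr => j _; rewrite !mxE mulrC.
  by rewrite Qw mulr1 addrN.
have ker1 : \rank (kermx M^T) = 1%N by rewrite mxrank_ker mxrank_tr (eqP Mfree) addnK.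
have keru : (kermx M^T <= row_mx (1 : 'M[R]_1) u)%MS.
  have [_ <-] := mxrank_leqif_sup (ker u Qu).
  by rewrite rank_rV row_mx_eq0 oner_eq0 ker1.
have : (row_mx (0 : 'M[R]_1) (u - v) <= row_mx (1 : 'M[R]_1) u)%MS.
  apply: submx_trans keru; apply/sub_kermxP.
  have -> : row_mx (0 : 'M[R]_1) (u - v) = row_mx 1 u - row_mx 1 v.
    by rewrite opp_row_mx add_row_mx subrr.
  by rewrite mulmxBl (sub_kermxP (ker u Qu)) (sub_kermxP (ker v Qv)) subrr.
case/sub_rVP=> c uvc; have := congr1 lsubmx uvc; rewrite linearZ /= !row_mxKl.
move/esym/eqP; rewrite scaler_eq0 oner_eq0 orbF => /eqP c0.
by move: uvc; rewrite c0 scale0r => /eqP; rewrite row_mx_eq0 subr_eq0 => /andP [_ /eqP].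
Qed.

Lemma facet_interior_mem (P : vec -> Prop) x : in_facet_interior P x -> P x.
Proof. by case=> F [[[c [b [_ [_ FP]]]] _] [/FP []]]. Qed.

Lemma facet_interior_dot_inj (P : vec -> Prop) x u v :
  in_facet_interior P x ->
  (forall z, P z -> -1 <= dot z u) -> (forall z, P z -> -1 <= dot z v) ->
  dot x u = -1 -> dot x v = -1 -> u = v.
Proof.
move=> [F [[[c [b [_ [_ FP]]]] [Q [QF Qfree]]] xF]] Pu Pv xu xv.
have FPw w : (forall z, P z -> -1 <= dot z w) -> forall z, F z -> -1 <= dot z w.
  by move=> Pw z /FP [/Pw].
apply: (affinely_free_dot_inj Qfree) => r.
  exact: (relint_dot_eq (FPw _ Pu) xF).
exact: (relint_dot_eq (FPw _ Pv) xF).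
Qed.

End Polar.

Lemma lat_inj (R : realType) n : injective (@lat R n).
Proof.
by move=> y z /rowP yz; apply/rowP => j; move: (yz j); rewrite !mxE => /intr_inj.
Qed.

Definition idot n (y v : 'rV[int]_n) : int := \sum_(j < n) y 0 j * v 0 j.

Lemma idotDl n (y z v : 'rV[int]_n) : idot (y + z) v = idot y v + idot z v.
Proof. by rewrite /idot -big_split; apply: eq_bigr => j _; rewrite mxE mulrDl. Qed.

Lemma idot0l n (v : 'rV[int]_n) : idot 0 v = 0.
Proof. by rewrite /idot big1 // => j _; rewrite mxE mul0r. Qed.

Lemma dot_lat (R : realType) n (y v : 'rV[int]_n) :
  dot (lat R y) (lat R v) = (idot y v)%:~R.
Proof. by rewrite rmorph_sum; apply: eq_bigr => j _; rewrite !mxE rmorphM. Qed.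

Section Tightness.
Variables (n : nat) (V : seq 'rV[int]_n).
Local Notation k := (size V).

Definition in_dual (y : 'rV[int]_n) : bool := [forall j : 'I_k, -1 <= idot y V`_j].

(* A vertex v of Delta is tight at y when <y, v> = -1, i.e. when y lies on the
   facet of Delta^* dual to v. *)

Definition at_most_one_tight (y : 'rV[int]_n) : bool :=
  [forall i : 'I_k, forall j : 'I_k,
     (idot y V`_i == -1) ==> (idot y V`_j == -1) ==> (i == j)].

Lemma at_most_one_tightP y :
  reflect (forall i j : 'I_k, idot y V`_i = -1 -> idot y V`_j = -1 -> i = j)
          (at_most_one_tight y).
Proof.
apply: (iffP forallP) => [y1 i j /eqP yi /eqP yj|y1 i].
  by apply/eqP; move/forallP: (y1 i) => /(_ j); rewrite yi yj.
apply/forallP => j; apply/implyP => /eqP yi; apply/implyP => /eqP yj.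
exact/eqP/y1.
Qed.

Definition loose_off (i : 'I_k) (x : 'rV[int]_n) : Prop :=
  -1 <= idot x V`_i /\ forall j, j != i -> 0 <= idot x V`_j.

Lemma exists_loose_off y : (0 < k)%N ->
  in_dual y -> at_most_one_tight y -> exists i, loose_off i y.
Proof.
move=> k_gt0 /forallP yV /at_most_one_tightP y1.
have loose (i : 'I_k) : (forall j, j != i -> idot y V`_j != -1) -> loose_off i y.
  move=> yj; split=> // j /yj; have := yV j; move: (idot y _) => p; lia.
case: (pickP (fun i : 'I_k => idot y V`_i == -1)) => [i /eqP yi|none].
  by exists i; apply: loose => j; apply: contra_neq => /y1; apply.
by exists (Ordinal k_gt0); apply: loose => j _; rewrite none.
Qed.

End Tightness.

Section DualLattice.
Variables (R : realType) (n : nat) (V : seq 'rV[int]_n).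
Local Notation k := (size V).
Local Notation D := (dual (convex_hull (map (@lat R n) V))).

Lemma dual_dot_vertex z (j : 'I_k) : D z -> -1 <= dot z (lat R V`_j).
Proof. by move/dual_convex_hullP; apply; rewrite map_f ?mem_nth. Qed.

Lemma dual_latP y : reflect (D (lat R y)) (in_dual V y).
Proof.
apply: (iffP forallP) => [yV|yD j]; last first.
  by rewrite -(ler_int R) intrN -dot_lat; exact: dual_dot_vertex.
apply/dual_convex_hullP => _ /mapP [v /(nthP 0) [j ltjk <-] ->].
by rewrite dot_lat -[-1 in X in X <= _]/((- 1)%:~R) ler_int (yV (Ordinal ltjk)).
Qed.

Lemma interior_dual_lat_neq y :
  interior D (lat R y) -> forall j : 'I_k, idot y V`_j != -1.
Proof.
move=> yint j; move/(interior_dual_dot_neq (map_f _ (mem_nth 0 (ltn_ord j)))): yint.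
by rewrite dot_lat; apply: contraNN => /eqP ->; rewrite intrN.
Qed.

Lemma interior_at_most_one_tight y : interior D (lat R y) -> at_most_one_tight V y.
Proof.
move/interior_dual_lat_neq => yV; apply/at_most_one_tightP => i j /eqP.
by rewrite (negbTE (yV i)).
Qed.

Lemma facet_interior_at_most_one_tight y : uniq V ->
  in_facet_interior D (lat R y) -> at_most_one_tight V y.
Proof.
move=> uV yF; apply/at_most_one_tightP => i j yi yj; apply/val_inj/eqP.
rewrite -(nth_uniq 0 (ltn_ord i) (ltn_ord j) uV).
apply/eqP/(@lat_inj R)/(facet_interior_dot_inj yF) => [z|z||].
- exact: dual_dot_vertex.
- exact: dual_dot_vertex.
- by rewrite dot_lat yi intrN.
- by rewrite dot_lat yj intrN.
Qed.

End DualLattice.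

Section JacobianRelations.
Variables (R : realType) (n : nat) (V W : seq 'rV[int]_n).
Local Notation C := (complex R).
Local Notation k := (size V).
Local Notation Z := (@zmono R n V).

Lemma in_jacobian0 (g : {mpoly C[k]}) : in_jacobian g 0.
Proof. by exists (fun=> 0); rewrite big1 // => i _; rewrite mul0r. Qed.

Lemma in_jacobianD (g x y : {mpoly C[k]}) :
  in_jacobian g x -> in_jacobian g y -> in_jacobian g (x + y).
Proof.
move=> [hx ->] [hy ->]; exists (fun i => hx i + hy i).
by rewrite -big_split; apply: eq_bigr => i _; rewrite mulrDl.
Qed.

Lemma in_jacobianZ (g : {mpoly C[k]}) c x : in_jacobian g x -> in_jacobian g (c *: x).
Proof.
move=> [h ->]; exists (fun i => c *: h i).
by rewrite scaler_sumr; apply: eq_bigr => i _; rewrite scalerAl.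
Qed.

Definition zexp (y : 'rV[int]_n) (i : 'I_k) : nat := absz (idot y V`_i + 1)%R.

Lemma zmonoE y : Z y = 'X_[[multinom zexp y i | i < k]].
Proof. by rewrite /zmono mpolyXE_id; apply: eq_bigr => i _; rewrite mnmE. Qed.

(* The monomial zeta^x zeta_i / prod_j zeta_j. *)
Definition cofactor (x : 'rV[int]_n) (i : 'I_k) : 'X_{1..k} :=
  [multinom absz (idot x V`_j + (j == i)%:Z)%R | j < k].

Lemma cofactor_mul_mderiv x i y :
  loose_off i x -> (forall j : 'I_k, -1 <= idot y V`_j) ->
  'X_[cofactor x i] * mderiv i (Z y) = (zexp y i)%:R *: Z (y + x).
Proof.
move=> [xi xj] yj; rewrite !zmonoE mderivX -scalerAr -mpolyXD mnmE.
have [->|ey] := eqVneq (zexp y i) 0%N; first by rewrite !scale0r.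
congr (_ *: 'X_[_]); apply/mnmP => j; rewrite mnmDE mnmBE !mnmE /zexp idotDl.
have := yj j; move: ey; rewrite /zexp.
case: (eqVneq j i) => [->|/xj]; rewrite /= ?eqxx.
  by move: xi; move: (idot x _) (idot y _) => p p'; lia.
by move: (idot x _) (idot y _) => p p'; lia.
Qed.

Definition shift_terms x i : seq (C * 'rV[int]_n) :=
  [seq ((zexp w i)%:R, w + x) | w <- W & zexp w i != 0%N].

Hypothesis W_dual : forall w, w \in W -> in_dual V w.

Lemma shift_terms_dual x i q : loose_off i x -> q \in shift_terms x i -> in_dual V q.2.
Proof.
move=> [xi xj] /mapP [w]; rewrite mem_filter /zexp => /andP [ew /W_dual/forallP wj] ->.
apply/forallP => j /=; rewrite idotDl; have := wj j; case: (eqVneq j i) => [->|/xj].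
  by move: ew xi; move: (idot w _) (idot x _) => p p'; lia.
by move: (idot w _) (idot x _) => p p'; lia.
Qed.

Lemma jacobian_shift_relation a x i : loose_off i x ->
  in_jacobian (@fpoly R n V W a) (a *: Z x + \sum_(q <- shift_terms x i) q.1 *: Z q.2).
Proof.
move=> xi; exists (fun j => if j == i then 'X_[cofactor x i] else 0).
rewrite (bigD1 i) //= eqxx [X in _ = _ + X]big1 ?addr0; last first.
  by move=> j /negbTE ->; rewrite mul0r.
rewrite /fpoly raddfD /= raddf_sum linearZ /= mulrDr mulr_sumr [LHS]addrC.
congr (_ + _).
  rewrite big_map big_filter big_mkcond big_seq [RHS]big_seq; apply: eq_bigr => w wW.
  rewrite cofactor_mul_mderiv //; last exact/forallP/W_dual.
  by have [->|] := eqVneq (zexp w i) 0%N; rewrite ?scale0r.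
rewrite -scalerAr cofactor_mul_mderiv // => [|j]; last by rewrite idot0l.
by rewrite add0r /zexp idot0l add0r scale1r.
Qed.

End JacobianRelations.

Lemma bounded_int_rows_finite n (B : nat) (p : pred 'rV[int]_n) :
  (forall y, p y -> forall j, (absz (y ord0 j) <= B)%N) ->
  exists S : seq 'rV[int]_n, uniq S /\ S =i p.
Proof.
move=> pB.
(* entries in [-B, B], shifted to [0, 2B] *)
pose box := [seq \row_j ((z 0 j : nat)%:Z - B%:Z)%R | z : 'rV['I_(B + B).+1]_n].
exists (undup [seq y <- box | p y]); split=> [|y]; first exact: undup_uniq.
rewrite mem_undup mem_filter andb_idr // => py.
apply/imageP; exists (\row_j inord (absz (y 0 j + B%:Z)%R)) => //.
apply/rowP => j; rewrite !mxE; have := pB y py j.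
have -> : (0 : 'I_1) = ord0 by apply/val_inj.
by move: (y ord0 j) => z zB; rewrite inordK; lia.
Qed.

Lemma convex_hull_lat_coord_le (R : realType) n (W : seq 'rV[int]_n) y :
  convex_hull (map (@lat R n) W) (lat R y) ->
  forall j, (absz (y ord0 j) <= \max_(w <- W) \max_(l < n) absz (w ord0 l))%N.
Proof.
move=> [t [t0 [t1 yW]]] j; set B := (\max_(w <- W) _)%N.
have /(congr1 (fun m : 'rV[R]_n => m 0 j)) := yW; rewrite summxE !mxE => yj.
rewrite -(ler_nat R) natr_absz intr_norm yj.
apply: le_trans (ler_norm_sum _ _ _) _.
apply: le_trans (_ : \sum_i t i * B%:R <= _); last by rewrite -mulr_suml t1 mul1r.
apply: ler_sum => i _; rewrite mxE normrM ger0_norm // ler_wpM2l //.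
have ltiW : (i < size W)%N by rewrite -(size_map (@lat R n)).
rewrite (nth_map 0) // mxE -intr_norm -natr_absz ler_nat.
apply: leq_trans (leq_bigmax_seq _ (mem_nth 0 ltiW) isT).
exact: (@leq_bigmax _ (fun l => absz (W`_i ord0 l)) j).
Qed.

Lemma lattice_hull_points_finite (R : realType) n (W : seq 'rV[int]_n)
    (p : pred 'rV[int]_n) :
  (forall y, p y -> convex_hull (map (@lat R n) W) (lat R y)) ->
  exists S : seq 'rV[int]_n, uniq S /\ S =i p.
Proof.
by move=> pW; apply: bounded_int_rows_finite => y /pW; apply: convex_hull_lat_coord_le.
Qed.

Theorem lemma3p1 (R : realType) (n : nat) (V W : seq 'rV[int]_n) :
  (* V enumerates the vertex set V(Delta) of Delta = conv V (a lattice polytope) *)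
  uniq V ->
  (forall x, is_extreme (convex_hull (map (@lat R n) V)) x <-> x \in map (@lat R n) V) ->
  (* the origin is in the interior of Delta *)
  interior (convex_hull (map (@lat R n) V)) 0 ->
  (* Delta^* is the lattice polytope conv W and W enumerates V(Delta^* ) *)
  uniq W ->
  (forall y, dual (convex_hull (map (@lat R n) V)) y <-> convex_hull (map (@lat R n) W) y) ->
  (forall y, is_extreme (dual (convex_hull (map (@lat R n) V))) y <-> y \in map (@lat R n) W) ->
  (* for generic a in C: outside a finite exceptional set *)
  exists E : seq (complex R), forall a : complex R, a \notin E ->
  forall xs : 'rV[int]_n,
    in_facet_interior (dual (convex_hull (map (@lat R n) V))) (lat R xs) ->
    exists cs : seq (complex R * 'rV[int]_n),
      (forall p, p \in cs ->
         boundary (dual (convex_hull (map (@lat R n) V))) (lat R p.2) /\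
         ~ in_facet_interior (dual (convex_hull (map (@lat R n) V))) (lat R p.2)) /\
      @in_jacobian R n V (@fpoly R n V W a)
        (@zmono R n V xs - \sum_(p <- cs) p.1 *: @zmono R n V p.2).
Proof.
move=> uV _ V0 _ DW _; set D := dual _.
have k_gt0 : (0 < size V)%N.
  rewrite -(size_map (@lat R n)); apply: (@convex_hull_size_gt0 _ _ _ 0).
  by case: V0 => e [e0]; apply=> i; rewrite subrr normr0.
have W_dual w : w \in W -> in_dual V w.
  by move=> wW; apply/dual_latP/DW/mem_convex_hull/map_f.
have [S [uS Sp]] : exists S, uniq S /\ S =i [pred y | in_dual V y && at_most_one_tight V y].
  by apply: (@lattice_hull_points_finite R _ W) => y /andP [/dual_latP/DW].
have [|E SE] := @generic_elimination _ _ _ 0 (fun a => in_jacobian (@fpoly R n V W a))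
  (fun a => in_jacobian0 _) (fun a => @in_jacobianD _ _ _ _) (fun a => @in_jacobianZ _ _ _ _)
  (@zmono R n V) (in_dual V) _ uS.
  move=> s; rewrite Sp => /andP [sV /(exists_loose_off k_gt0 sV) [i si]].
  exists (shift_terms R W s i) => [q|a]; first exact: shift_terms_dual.
  exact: jacobian_shift_relation.
exists E => a aE xs xsF.
have xsS : xs \in S.
  rewrite Sp inE (facet_interior_at_most_one_tight uV xsF) andbT.
  exact/dual_latP/(facet_interior_mem xsF).
have [cs [csS csJ]] := SE a aE xs xsS; exists cs; split=> // q /csS [].
rewrite Sp inE => /nandP [/negP //|q1 /(@dual_latP R) qD].
split; first by split=> // /interior_at_most_one_tight; apply/negP.
by move/(facet_interior_at_most_one_tight uV); apply/negP.
Qed.
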